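(* Let $(\mathcal{E},\mathcal{M})$ be an orthogonal factorization system on a category $\mathcal{D}$ with pullbacks, and let $\mathcal{A}$ be a category with a terminal object $1$. Let $\mathcal{E}'$ be the class of natural transformations $e$ between functors $\mathcal{A}\to\mathcal{D}$ such that $e_1\in\mathcal{E}$, and let $\mathcal{M}'$ be the class of cartesian natural transformations $m$ between functors $\mathcal{A}\to\mathcal{D}$ such that $m_1\in\mathcal{M}$. Then $(\mathcal{E}',\mathcal{M}')$ is an orthogonal factorization system on the functor category $[\mathcal{A},\mathcal{D}]$. Moreover, for every functor $G:\mathcal{A}\to\mathcal{D}$ there is an equivalence of categories $\mathcal{M}'/G \simeq \mathcal{M}/G1$.
   Context: An orthogonal factorization system $(\mathcal{E},\mathcal{M})$ on a category: both classes contain all isomorphisms and are closed under composition; for every commuting square $g\circ e = m\circ f$ with $e\in\mathcal{E}$, $m\in\mathcal{M}$ there is a unique $d$ with $d\circ e=f$ and $m\circ d=g$; every morphism factors as $m\circ e$ with $e\in\mathcal{E}$, $m\in\mathcal{M}$. A natural transformation is cartesian if all its naturality squares are pullbacks. For a class $\mathcal{N}$ of morphisms and an object $X$, $\mathcal{N}/X$ denotes the category whose objects are pairs $(S,s)$ with $s:S\to X$ in $\mathcal{N}$, and whose morphisms $(S,s)\to(S',s')$ are morphisms $f:S\to S'$ with $s'\circ f = s$. *)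

From Stdlib Require Import ProofIrrelevance FunctionalExtensionality.

Record Category := {
  Ob : Type;
  Hom : Ob -> Ob -> Type;
  idm : forall a, Hom a a;
  comp : forall a b c, Hom b c -> Hom a b -> Hom a c;
  comp_assoc : forall a b c d (h : Hom c d) (g : Hom b c) (f : Hom a b),
      comp a c d h (comp a b c g f) = comp a b d (comp b c d h g) f;
  comp_id_l : forall a b (f : Hom a b), comp a b b (idm b) f = f;
  comp_id_r : forall a b (f : Hom a b), comp a a b f (idm a) = f }.

Arguments Hom {c0} a b : rename.
Arguments idm {c0} a : rename.
Arguments comp {c0 a b c} g f : rename.
Notation "g ∘ f" := (comp g f) (at level 40, left associativity).

Definition MorClass (C : Category) := forall a b : Ob C, @Hom C a b -> Prop.

Definition is_iso {C : Category} {a b : Ob C} (f : Hom a b) : Prop :=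
  exists g : Hom b a, g ∘ f = idm a /\ f ∘ g = idm b.

Record is_OFS (C : Category) (E M : MorClass C) : Prop := {
  ofs_E_iso : forall a b (f : @Hom C a b), is_iso f -> E a b f;
  ofs_M_iso : forall a b (f : @Hom C a b), is_iso f -> M a b f;
  ofs_E_comp : forall a b c (g : @Hom C b c) (f : Hom a b),
      E a b f -> E b c g -> E a c (g ∘ f);
  ofs_M_comp : forall a b c (g : @Hom C b c) (f : Hom a b),
      M a b f -> M b c g -> M a c (g ∘ f);
  ofs_lift : forall a b c d (e : @Hom C a b) (m : Hom c d) (f : Hom a c) (g : Hom b d),
      E a b e -> M c d m -> g ∘ e = m ∘ f ->
      exists! dg : Hom b c, dg ∘ e = f /\ m ∘ dg = g;
  ofs_fact : forall a b (f : @Hom C a b),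
      exists c (e : Hom a c) (m : Hom c b), E a c e /\ M c b m /\ m ∘ e = f }.

Definition is_pullback {C : Category} {P X Y Z : Ob C}
  (p1 : Hom P X) (p2 : Hom P Y) (f : Hom X Z) (g : Hom Y Z) : Prop :=
  f ∘ p1 = g ∘ p2 /\
  forall Q (q1 : Hom Q X) (q2 : Hom Q Y), f ∘ q1 = g ∘ q2 ->
    exists! u : Hom Q P, p1 ∘ u = q1 /\ p2 ∘ u = q2.

Definition has_pullbacks (C : Category) : Prop :=
  forall (X Y Z : Ob C) (f : Hom X Z) (g : Hom Y Z),
    exists P (p1 : Hom P X) (p2 : Hom P Y), is_pullback p1 p2 f g.

Definition is_terminal {C : Category} (t : Ob C) : Prop :=
  forall a : Ob C, exists f : Hom a t, forall g : Hom a t, g = f.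

Record Functor (C D : Category) := {
  fobj : Ob C -> Ob D;
  fmap : forall a b, @Hom C a b -> @Hom D (fobj a) (fobj b);
  fmap_id : forall a, fmap a a (idm a) = idm (fobj a);
  fmap_comp : forall a b c (g : @Hom C b c) (f : Hom a b),
      fmap a c (g ∘ f) = fmap b c g ∘ fmap a b f }.

Arguments fobj {C D} F a : rename.
Arguments fmap {C D} F {a b} f : rename.

Record NatTrans {C D : Category} (F G : Functor C D) := {
  ntc : forall a, @Hom D (fobj F a) (fobj G a);
  nt_natural : forall a b (f : @Hom C a b),
      fmap G f ∘ ntc a = ntc b ∘ fmap F f }.

Arguments ntc {C D F G} n a : rename.

Lemma nt_eq {C D : Category} {F G : Functor C D} (n m : NatTrans F G) :
  (forall a, ntc n a = ntc m a) -> n = m.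
Proof.
  destruct n as [n Hn], m as [m Hm]; simpl; intros H.
  assert (n = m) by (apply functional_extensionality_dep; exact H).
  subst m. f_equal. apply proof_irrelevance.
Qed.

Definition nt_id {C D : Category} (F : Functor C D) : NatTrans F F.
Proof.
  refine {| ntc := fun a => idm (fobj F a) |}.
  intros a b f. rewrite comp_id_l, comp_id_r. reflexivity.
Defined.

Definition nt_comp {C D : Category} {F G H : Functor C D}
  (m : NatTrans G H) (n : NatTrans F G) : NatTrans F H.
Proof.
  refine {| ntc := fun a => ntc m a ∘ ntc n a |}.
  intros a b f.
  rewrite comp_assoc, nt_natural, <- comp_assoc, nt_natural, comp_assoc.
  reflexivity.
Defined.

Definition FunCat (C D : Category) : Category.
Proof.
  refine {| Ob := Functor C D;
            Hom := fun F G => NatTrans F G;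
            idm := nt_id;
            comp := fun F G H m n => nt_comp m n |}.
  - intros; apply nt_eq; intros; simpl; apply comp_assoc.
  - intros; apply nt_eq; intros; simpl; apply comp_id_l.
  - intros; apply nt_eq; intros; simpl; apply comp_id_r.
Defined.

Definition SliceOb {C : Category} (N : MorClass C) (X : Ob C) : Type :=
  { S : Ob C & { s : Hom S X | N S X s } }.

Definition slice_map {C : Category} {N : MorClass C} {X : Ob C}
  (x : SliceOb N X) : Hom (projT1 x) X := proj1_sig (projT2 x).

Definition SliceHom {C : Category} {N : MorClass C} {X : Ob C}
  (x y : SliceOb N X) : Type :=
  { f : Hom (projT1 x) (projT1 y) | slice_map y ∘ f = slice_map x }.

Lemma slice_hom_eq {C : Category} {N : MorClass C} {X : Ob C}
  {x y : SliceOb N X} (f g : SliceHom x y) : proj1_sig f = proj1_sig g -> f = g.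
Proof.
  destruct f as [f Hf], g as [g Hg]; simpl; intros H; subst g.
  f_equal; apply proof_irrelevance.
Qed.

Definition slice_id {C : Category} {N : MorClass C} {X : Ob C}
  (x : SliceOb N X) : SliceHom x x.
Proof. exists (idm (projT1 x)). apply comp_id_r. Defined.

Definition slice_comp {C : Category} {N : MorClass C} {X : Ob C}
  {x y z : SliceOb N X} (g : SliceHom y z) (f : SliceHom x y) : SliceHom x z.
Proof.
  exists (proj1_sig g ∘ proj1_sig f).
  rewrite comp_assoc, (proj2_sig g). exact (proj2_sig f).
Defined.

Definition Slice {C : Category} (N : MorClass C) (X : Ob C) : Category.
Proof.
  refine {| Ob := SliceOb N X;
            Hom := fun x y => SliceHom x y;
            idm := slice_id;
            comp := fun x y z g f => slice_comp g f |}.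
  - intros; apply slice_hom_eq; simpl; apply comp_assoc.
  - intros; apply slice_hom_eq; simpl; apply comp_id_l.
  - intros; apply slice_hom_eq; simpl; apply comp_id_r.
Defined.

Definition Fid (C : Category) : Functor C C.
Proof.
  refine {| fobj := fun a => a; fmap := fun a b f => f |}; reflexivity.
Defined.

Definition Fcomp {B C D : Category} (G : Functor C D) (F : Functor B C) : Functor B D.
Proof.
  refine {| fobj := fun a => fobj G (fobj F a);
            fmap := fun a b f => fmap G (fmap F f) |}.
  - intros; rewrite !fmap_id; reflexivity.
  - intros; rewrite !fmap_comp; reflexivity.
Defined.

Definition NatIso {C D : Category} (F G : Functor C D) : Prop :=
  exists n : NatTrans F G, forall a, is_iso (ntc n a).

Definition equivalent (C D : Category) : Prop :=
  exists (F : Functor C D) (H : Functor D C),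
    NatIso (Fcomp H F) (Fid C) /\ NatIso (Fcomp F H) (Fid D).

Definition is_cartesian {C D : Category} {F G : Functor C D} (n : NatTrans F G) : Prop :=
  forall a b (f : @Hom C a b),
    is_pullback (ntc n a) (fmap F f) (fmap G f) (ntc n b).

(** The classes E' and M' on [A, D], relative to a chosen terminal object [one] of A. *)
Definition E' {A D : Category} (E : MorClass D) (one : Ob A) : MorClass (FunCat A D) :=
  fun F G (n : NatTrans F G) => E _ _ (ntc n one).

Definition M' {A D : Category} (M : MorClass D) (one : Ob A) : MorClass (FunCat A D) :=
  fun F G (n : NatTrans F G) => is_cartesian n /\ M _ _ (ntc n one).

From Stdlib Require Import IndefiniteDescription.

(* A cartesian transformation m : Z => W is determined over W by its component at the
   terminal object: a transformation d into Z with m d = g is the same as a map d_1 with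
   m_1 d_1 = g_1, because each Z a is the pullback of Z 1 along W (a -> 1).  Hence lifts
   against m are computed at 1 in D and then extended, a map f : X => Y factors through the
   pullback of the M-part of f_1 along Y, and the functor a |-> G a x_{G 1} C inverts
   evaluation at 1 on M'-maps into G. *)

#[local] Arguments comp_assoc {_ _ _ _ _} h g f.
#[local] Arguments comp_id_l {_ _ _} f.
#[local] Arguments comp_id_r {_ _ _} f.
#[local] Arguments nt_natural {C D F G} n {a b} f.
#[local] Arguments fmap_comp {_ _} _ {_ _ _} _ _.
#[local] Arguments fmap_id {_ _} _ _.

Section Pullbacks.
Context {C : Category}.

Lemma iso_monic {a b x : Ob C} (i : Hom a b) (u v : Hom x a) :
  is_iso i -> i ∘ u = i ∘ v -> u = v.
Proof.
  intros [j [Hji _]] H.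
  rewrite <- (comp_id_l u), <- (comp_id_l v), <- Hji, <- !comp_assoc, H.
  reflexivity.
Qed.

Lemma pullback_hom_ext {P X Y Z Q : Ob C} {p1 : Hom P X} {p2 : Hom P Y}
  {f : Hom X Z} {g : Hom Y Z} (H : is_pullback p1 p2 f g) (u v : Hom Q P) :
  p1 ∘ u = p1 ∘ v -> p2 ∘ u = p2 ∘ v -> u = v.
Proof.
  intros H1 H2. destruct H as [Hc H].
  assert (Hv : f ∘ (p1 ∘ v) = g ∘ (p2 ∘ v)) by (rewrite !comp_assoc, Hc; reflexivity).
  destruct (H Q _ _ Hv) as [w [_ Hw]].
  rewrite <- (Hw u), (Hw v); auto.
Qed.

Definition pullback_lift {P X Y Z Q : Ob C} {p1 : Hom P X} {p2 : Hom P Y}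
  {f : Hom X Z} {g : Hom Y Z} (H : is_pullback p1 p2 f g)
  (q1 : Hom Q X) (q2 : Hom Q Y) (Hq : f ∘ q1 = g ∘ q2) : Hom Q P :=
  proj1_sig (constructive_indefinite_description _ (proj2 H Q q1 q2 Hq)).

Section PullbackLift.
Context {P X Y Z Q : Ob C} {p1 : Hom P X} {p2 : Hom P Y} {f : Hom X Z} {g : Hom Y Z}
  (H : is_pullback p1 p2 f g) (q1 : Hom Q X) (q2 : Hom Q Y) (Hq : f ∘ q1 = g ∘ q2).

Lemma pullback_lift_fst : p1 ∘ pullback_lift H q1 q2 Hq = q1.
Proof.
  exact (proj1 (proj1 (proj2_sig
    (constructive_indefinite_description _ (proj2 H Q q1 q2 Hq))))).
Qed.

Lemma pullback_lift_snd : p2 ∘ pullback_lift H q1 q2 Hq = q2.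
Proof.
  exact (proj2 (proj1 (proj2_sig
    (constructive_indefinite_description _ (proj2 H Q q1 q2 Hq))))).
Qed.
End PullbackLift.

Lemma pullback_comparison_iso {P P' X Y Z : Ob C} {p1 : Hom P X} {p2 : Hom P Y}
  {p1' : Hom P' X} {p2' : Hom P' Y} {f : Hom X Z} {g : Hom Y Z}
  (H : is_pullback p1 p2 f g) (H' : is_pullback p1' p2' f g) (u : Hom P P') :
  p1' ∘ u = p1 -> p2' ∘ u = p2 -> is_iso u.
Proof.
  intros H1 H2. exists (pullback_lift H p1' p2' (proj1 H')).
  pose proof (pullback_lift_fst H p1' p2' (proj1 H')) as V1.
  pose proof (pullback_lift_snd H p1' p2' (proj1 H')) as V2.
  split.
  - apply (pullback_hom_ext H); rewrite comp_assoc, comp_id_r;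
      [rewrite V1 | rewrite V2]; auto.
  - apply (pullback_hom_ext H'); rewrite comp_assoc, comp_id_r;
      [rewrite H1 | rewrite H2]; auto.
Qed.

Lemma pullback_of_isos {P X Y Z : Ob C} (p1 : Hom P X) (p2 : Hom P Y)
  (f : Hom X Z) (g : Hom Y Z) :
  is_iso p1 -> is_iso g -> f ∘ p1 = g ∘ p2 -> is_pullback p1 p2 f g.
Proof.
  intros Hp1 Hg Hc. split; [exact Hc|]. intros Q q1 q2 Hq.
  pose proof Hp1 as [i [_ Hpi]].
  exists (i ∘ q1). split; [split|].
  - rewrite comp_assoc, Hpi, comp_id_l. reflexivity.
  - apply (iso_monic g); [exact Hg|].
    rewrite comp_assoc, <- Hc, <- comp_assoc, (comp_assoc p1), Hpi, comp_id_l.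
    exact Hq.
  - intros u [Hu _]. apply (iso_monic p1); [exact Hp1|].
    rewrite Hu, comp_assoc, Hpi, comp_id_l. reflexivity.
Qed.

Lemma pullback_compose {Fa Fb Ga Gb Ha Hb : Ob C}
  (na : Hom Fa Ga) (nb : Hom Fb Gb) (ma : Hom Ga Ha) (mb : Hom Gb Hb)
  (Ff : Hom Fa Fb) (Gf : Hom Ga Gb) (Hf : Hom Ha Hb) :
  is_pullback na Ff Gf nb -> is_pullback ma Gf Hf mb ->
  is_pullback (ma ∘ na) Ff Hf (mb ∘ nb).
Proof.
  intros [Cn Pn] [Cm Pm]. split.
  - rewrite comp_assoc, Cm, <- comp_assoc, Cn, comp_assoc. reflexivity.
  - intros Q q1 q2 Hq. rewrite <- comp_assoc in Hq.
    destruct (Pm Q q1 (nb ∘ q2) Hq) as [v [[V1 V2] Vu]].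
    destruct (Pn Q v q2 V2) as [u [[U1 U2] Uu]].
    exists u. split; [split|].
    + rewrite <- comp_assoc, U1. exact V1.
    + exact U2.
    + intros u' [W1 W2]. apply Uu. split; [|exact W2].
      symmetry. apply Vu. split.
      * rewrite comp_assoc. exact W1.
      * rewrite comp_assoc, Cn, <- comp_assoc, W2. reflexivity.
Qed.

Lemma pullback_pasting {R X Y W O V : Ob C}
  (r1 : Hom R X) (r2 : Hom R Y) (f : Hom X W) (g : Hom Y W)
  (o1 : Hom O V) (o2 : Hom O Y) (k : Hom V X) (t : Hom O R) :
  is_pullback r1 r2 f g -> is_pullback o1 o2 (f ∘ k) g ->
  r1 ∘ t = k ∘ o1 -> r2 ∘ t = o2 ->
  is_pullback o1 t k r1.
Proof.
  intros Hr Ho T1 T2. split; [symmetry; exact T1|].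
  intros Q q1 q2 Hq.
  assert (Hq' : (f ∘ k) ∘ q1 = g ∘ (r2 ∘ q2)).
  { rewrite <- comp_assoc, Hq, !comp_assoc, (proj1 Hr). reflexivity. }
  destruct (proj2 Ho Q q1 (r2 ∘ q2) Hq') as [u [[U1 U2] Uu]].
  exists u. split; [split|].
  - exact U1.
  - apply (pullback_hom_ext Hr).
    + rewrite comp_assoc, T1, <- comp_assoc, U1. exact Hq.
    + rewrite comp_assoc, T2. exact U2.
  - intros u' [W1 W2]. apply Uu. split; [exact W1|].
    rewrite <- T2, <- comp_assoc, W2. reflexivity.
Qed.

Definition pullback_choice (Hpb : has_pullbacks C) {X Y Z : Ob C}
  (f : Hom X Z) (g : Hom Y Z) :
  {P : Ob C & {p1 : Hom P X & {p2 : Hom P Y | is_pullback p1 p2 f g}}}.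
Proof.
  destruct (constructive_indefinite_description _ (Hpb _ _ _ f g)) as [P HP].
  destruct (constructive_indefinite_description _ HP) as [p1 Hp1].
  destruct (constructive_indefinite_description _ Hp1) as [p2 Hp2].
  exact (existT _ P (existT _ p1 (exist _ p2 Hp2))).
Defined.
End Pullbacks.

Lemma ofs_E_cancel_iso {C : Category} {E M : MorClass C} (HO : is_OFS C E M)
  {a b c : Ob C} (f : Hom a b) (i : Hom b c) :
  is_iso i -> E a c (i ∘ f) -> E a b f.
Proof.
  intros [j [Hji Hij]] H.
  replace f with (j ∘ (i ∘ f)) by (rewrite comp_assoc, Hji, comp_id_l; reflexivity).
  apply (ofs_E_comp _ _ _ HO); [exact H|].
  apply (ofs_E_iso _ _ _ HO). exists i. split; assumption.
Qed.

Lemma nt_iso_component {C D : Category} {F G : Functor C D} (n : NatTrans F G) a :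
  @is_iso (FunCat C D) F G n -> is_iso (ntc n a).
Proof.
  intros [m [H1 H2]]. exists (ntc m a).
  split; [exact (f_equal (fun k => ntc k a) H1) | exact (f_equal (fun k => ntc k a) H2)].
Qed.

Lemma nt_iso_of_components {C D : Category} {F G : Functor C D} (n : NatTrans F G) :
  (forall a, is_iso (ntc n a)) -> @is_iso (FunCat C D) F G n.
Proof.
  intros H.
  set (inv a := proj1_sig (constructive_indefinite_description _ (H a))).
  assert (I1 : forall a, inv a ∘ ntc n a = idm _)
    by (intro a; exact (proj1 (proj2_sig (constructive_indefinite_description _ (H a))))).
  assert (I2 : forall a, ntc n a ∘ inv a = idm _)
    by (intro a; exact (proj2 (proj2_sig (constructive_indefinite_description _ (H a))))).
  assert (Hnat : forall a b (f : Hom a b), fmap F f ∘ inv a = inv b ∘ fmap G f).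
  { intros a b f. apply (iso_monic (ntc n b)); [apply H|].
    rewrite !comp_assoc, <- nt_natural, I2, <- comp_assoc, I2, comp_id_l, comp_id_r.
    reflexivity. }
  exists {| ntc := inv; nt_natural := Hnat |}.
  split; apply nt_eq; intro a; simpl; auto.
Qed.

Lemma slice_hom_iso {C : Category} {N : MorClass C} {X : Ob C} {x y : SliceOb N X}
  (u : SliceHom x y) : is_iso (proj1_sig u) -> @is_iso (Slice N X) x y u.
Proof.
  intros [v [V1 V2]].
  assert (Hv : slice_map x ∘ v = slice_map y).
  { rewrite <- (proj2_sig u), <- comp_assoc, V2, comp_id_r. reflexivity. }
  exists (exist _ v Hv). split; apply slice_hom_eq; simpl; assumption.
Qed.

Lemma slice_nt_comm {A D : Category} {N : MorClass (FunCat A D)} {G : Functor A D}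
  {x y : SliceOb N G} (phi : SliceHom x y) a :
  ntc (slice_map y) a ∘ ntc (proj1_sig phi) a = ntc (slice_map x) a.
Proof. exact (f_equal (fun k => ntc k a) (proj2_sig phi)). Qed.

Section TerminalObject.
Context {A : Category} {one : Ob A} (Hone : is_terminal one).

Definition bang (a : Ob A) : Hom a one :=
  proj1_sig (constructive_indefinite_description _ (Hone a)).

Lemma bang_unique a (g : Hom a one) : g = bang a.
Proof. exact (proj2_sig (constructive_indefinite_description _ (Hone a)) g). Qed.

Lemma bang_comp a b (h : Hom a b) : bang b ∘ h = bang a.
Proof. apply bang_unique. Qed.

Lemma bang_one : bang one = idm one.
Proof. symmetry; apply bang_unique. Qed.

Section CartesianExtension.
Context {D : Category} {Y Z W : Functor A D} (m : NatTrans Z W) (Hm : is_cartesian m).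

Lemma cartesian_nt_ext (d d' : NatTrans Y Z) :
  (forall a, ntc m a ∘ ntc d a = ntc m a ∘ ntc d' a) -> ntc d one = ntc d' one -> d = d'.
Proof.
  intros Hmd Hone_eq. apply nt_eq. intro a.
  apply (pullback_hom_ext (Hm a one (bang a))); [apply Hmd|].
  rewrite !nt_natural, Hone_eq. reflexivity.
Qed.

Section Extend.
Variables (g : NatTrans Y W) (d1 : Hom (fobj Y one) (fobj Z one)).
Hypothesis Hd1 : ntc m one ∘ d1 = ntc g one.

Lemma cartesian_extend_comm a :
  fmap W (bang a) ∘ ntc g a = ntc m one ∘ (d1 ∘ fmap Y (bang a)).
Proof. rewrite nt_natural, comp_assoc, Hd1. reflexivity. Qed.

Definition cartesian_extend_component a : Hom (fobj Y a) (fobj Z a) :=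
  pullback_lift (Hm a one (bang a)) _ _ (cartesian_extend_comm a).

Lemma cartesian_extend_component_fst a :
  ntc m a ∘ cartesian_extend_component a = ntc g a.
Proof. apply pullback_lift_fst. Qed.

Lemma cartesian_extend_component_snd a :
  fmap Z (bang a) ∘ cartesian_extend_component a = d1 ∘ fmap Y (bang a).
Proof. apply pullback_lift_snd. Qed.

Lemma cartesian_extend_natural a b (h : Hom a b) :
  fmap Z h ∘ cartesian_extend_component a = cartesian_extend_component b ∘ fmap Y h.
Proof.
  apply (pullback_hom_ext (Hm b one (bang b))).
  - rewrite !comp_assoc, <- nt_natural, <- comp_assoc, !cartesian_extend_component_fst.
    apply nt_natural.
  - rewrite !comp_assoc, <- fmap_comp, bang_comp, cartesian_extend_component_snd,
      cartesian_extend_component_snd, <- comp_assoc, <- fmap_comp, bang_comp.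
    reflexivity.
Qed.

Definition cartesian_extend : NatTrans Y Z :=
  {| ntc := cartesian_extend_component; nt_natural := cartesian_extend_natural |}.

Lemma cartesian_extend_comp a : ntc m a ∘ ntc cartesian_extend a = ntc g a.
Proof. apply cartesian_extend_component_fst. Qed.

Lemma cartesian_extend_one : ntc cartesian_extend one = d1.
Proof.
  apply (pullback_hom_ext (Hm one one (bang one))).
  - rewrite cartesian_extend_comp. symmetry. exact Hd1.
  - simpl. rewrite cartesian_extend_component_snd, bang_one, !fmap_id,
      comp_id_l, comp_id_r. reflexivity.
Qed.
End Extend.
End CartesianExtension.

Section PullbackFunctor.
Context {D : Category} (Hpb : has_pullbacks D) (G : Functor A D).

Section Along.
Context {C : Ob D} (c : Hom C (fobj G one)).

Let pbf_choice a := pullback_choice Hpb (fmap G (bang a)) c.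
Definition pbf_ob a : Ob D := projT1 (pbf_choice a).
Definition pbf_fst a : Hom (pbf_ob a) (fobj G a) := projT1 (projT2 (pbf_choice a)).
Definition pbf_snd a : Hom (pbf_ob a) C := proj1_sig (projT2 (projT2 (pbf_choice a))).
Lemma pbf_pullback a : is_pullback (pbf_fst a) (pbf_snd a) (fmap G (bang a)) c.
Proof. exact (proj2_sig (projT2 (projT2 (pbf_choice a)))). Qed.

Lemma pbf_fmap_comm a b (h : Hom a b) :
  fmap G (bang b) ∘ (fmap G h ∘ pbf_fst a) = c ∘ pbf_snd a.
Proof. rewrite comp_assoc, <- fmap_comp, bang_comp. exact (proj1 (pbf_pullback a)). Qed.

Definition pbf_fmap a b (h : Hom a b) : Hom (pbf_ob a) (pbf_ob b) :=
  pullback_lift (pbf_pullback b) _ _ (pbf_fmap_comm a b h).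

Lemma pbf_fmap_fst a b (h : Hom a b) : pbf_fst b ∘ pbf_fmap a b h = fmap G h ∘ pbf_fst a.
Proof. apply pullback_lift_fst. Qed.

Lemma pbf_fmap_snd a b (h : Hom a b) : pbf_snd b ∘ pbf_fmap a b h = pbf_snd a.
Proof. apply pullback_lift_snd. Qed.

Definition pullback_functor : Functor A D.
Proof.
  refine {| fobj := pbf_ob; fmap := pbf_fmap |}.
  - intro a. apply (pullback_hom_ext (pbf_pullback a)).
    + rewrite pbf_fmap_fst, fmap_id, comp_id_l, comp_id_r. reflexivity.
    + rewrite pbf_fmap_snd, comp_id_r. reflexivity.
  - intros a b d g f. apply (pullback_hom_ext (pbf_pullback d)).
    + rewrite pbf_fmap_fst, comp_assoc, pbf_fmap_fst, <- comp_assoc, pbf_fmap_fst,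
        comp_assoc, fmap_comp.
      reflexivity.
    + rewrite pbf_fmap_snd, comp_assoc, !pbf_fmap_snd. reflexivity.
Defined.

Definition pbf_proj : NatTrans pullback_functor G.
Proof.
  refine (Build_NatTrans _ _ pullback_functor G pbf_fst _).
  intros a b h. symmetry. apply pbf_fmap_fst.
Defined.

Lemma pbf_proj_cartesian : is_cartesian pbf_proj.
Proof.
  intros a b h.
  pose proof (pbf_pullback a) as Ha.
  rewrite <- (bang_comp a b h), fmap_comp in Ha.
  exact (pullback_pasting _ _ _ _ _ _ _ _ (pbf_pullback b) Ha
           (pbf_fmap_fst a b h) (pbf_fmap_snd a b h)).
Qed.

Lemma pbf_fst_one : pbf_fst one = c ∘ pbf_snd one.
Proof.
  pose proof (proj1 (pbf_pullback one)) as H.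
  rewrite bang_one, fmap_id, comp_id_l in H. exact H.
Qed.

Lemma pbf_snd_one_iso : is_iso (pbf_snd one).
Proof.
  assert (Hc : fmap G (bang one) ∘ c = c ∘ idm C)
    by (rewrite bang_one, fmap_id, comp_id_l, comp_id_r; reflexivity).
  exists (pullback_lift (pbf_pullback one) c (idm C) Hc).
  split; [|apply pullback_lift_snd].
  apply (pullback_hom_ext (pbf_pullback one)).
  - rewrite comp_assoc, pullback_lift_fst, comp_id_r, pbf_fst_one. reflexivity.
  - rewrite comp_assoc, pullback_lift_snd, comp_id_l, comp_id_r. reflexivity.
Qed.

Lemma pbf_nt_ext {X : Functor A D} (u v : NatTrans X pullback_functor) :
  (forall a, pbf_fst a ∘ ntc u a = pbf_fst a ∘ ntc v a) ->
  (forall a, pbf_snd a ∘ ntc u a = pbf_snd a ∘ ntc v a) -> u = v.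
Proof.
  intros H1 H2. apply nt_eq. intro a.
  exact (pullback_hom_ext (pbf_pullback a) _ _ (H1 a) (H2 a)).
Qed.

Section Pair.
Context {X : Functor A D} (f : NatTrans X G) (e : forall a, Hom (fobj X a) C)
  (He1 : forall a, fmap G (bang a) ∘ ntc f a = c ∘ e a)
  (He2 : forall a b (h : Hom a b), e b ∘ fmap X h = e a).

Definition pbf_pair_component a : Hom (fobj X a) (pbf_ob a) :=
  pullback_lift (pbf_pullback a) (ntc f a) (e a) (He1 a).

Lemma pbf_pair_natural a b (h : Hom a b) :
  pbf_fmap a b h ∘ pbf_pair_component a = pbf_pair_component b ∘ fmap X h.
Proof.
  unfold pbf_pair_component. apply (pullback_hom_ext (pbf_pullback b)).
  - rewrite !comp_assoc, pbf_fmap_fst, <- comp_assoc, !pullback_lift_fst. apply nt_natural.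
  - rewrite !comp_assoc, pbf_fmap_snd, !pullback_lift_snd, He2. reflexivity.
Qed.

Definition pbf_pair : NatTrans X pullback_functor :=
  Build_NatTrans _ _ X pullback_functor pbf_pair_component pbf_pair_natural.

Lemma pbf_pair_fst a : pbf_fst a ∘ ntc pbf_pair a = ntc f a.
Proof. apply pullback_lift_fst. Qed.

Lemma pbf_pair_snd a : pbf_snd a ∘ ntc pbf_pair a = e a.
Proof. apply pullback_lift_snd. Qed.
End Pair.
End Along.

Section AlongMap.
Context {C C' : Ob D} (c : Hom C (fobj G one)) (c' : Hom C' (fobj G one)) (k : Hom C C')
  (Hk : c' ∘ k = c).

Lemma pullback_functor_map_comm a :
  fmap G (bang a) ∘ ntc (pbf_proj c) a = c' ∘ (k ∘ pbf_snd c a).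
Proof. rewrite comp_assoc, Hk. exact (proj1 (pbf_pullback c a)). Qed.

Lemma pullback_functor_map_const a b (h : Hom a b) :
  k ∘ pbf_snd c b ∘ fmap (pullback_functor c) h = k ∘ pbf_snd c a.
Proof. rewrite <- comp_assoc. simpl. rewrite pbf_fmap_snd. reflexivity. Qed.

Definition pullback_functor_map : NatTrans (pullback_functor c) (pullback_functor c') :=
  pbf_pair c' (pbf_proj c) _ pullback_functor_map_comm pullback_functor_map_const.

Lemma pullback_functor_map_fst a :
  pbf_fst c' a ∘ ntc pullback_functor_map a = pbf_fst c a.
Proof. apply pbf_pair_fst. Qed.

Lemma pullback_functor_map_snd a :
  pbf_snd c' a ∘ ntc pullback_functor_map a = k ∘ pbf_snd c a.
Proof. exact (pbf_pair_snd c' _ _ _ _ a). Qed.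
End AlongMap.

Lemma pullback_functor_map_id {C : Ob D} (c : Hom C (fobj G one)) (Hk : c ∘ idm C = c) :
  pullback_functor_map c c (idm C) Hk = nt_id (pullback_functor c).
Proof.
  apply pbf_nt_ext; intro a; cbn [ntc nt_id nt_comp].
  - rewrite pullback_functor_map_fst, comp_id_r. reflexivity.
  - rewrite pullback_functor_map_snd, comp_id_l, comp_id_r. reflexivity.
Qed.

Lemma pullback_functor_map_comp {C1 C2 C3 : Ob D} (c1 : Hom C1 (fobj G one))
  (c2 : Hom C2 (fobj G one)) (c3 : Hom C3 (fobj G one))
  (k1 : Hom C1 C2) (k2 : Hom C2 C3) (H1 : c2 ∘ k1 = c1) (H2 : c3 ∘ k2 = c2)
  (H12 : c3 ∘ (k2 ∘ k1) = c1) :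
  pullback_functor_map c1 c3 (k2 ∘ k1) H12 =
  nt_comp (pullback_functor_map c2 c3 k2 H2) (pullback_functor_map c1 c2 k1 H1).
Proof.
  apply pbf_nt_ext; intro a; cbn [ntc nt_id nt_comp].
  - rewrite pullback_functor_map_fst, comp_assoc, (pullback_functor_map_fst c2 c3),
      (pullback_functor_map_fst c1 c2).
    reflexivity.
  - rewrite pullback_functor_map_snd, comp_assoc, (pullback_functor_map_snd c2 c3),
      <- !comp_assoc, (pullback_functor_map_snd c1 c2).
    reflexivity.
Qed.
End PullbackFunctor.

Section FunctorCategoryOFS.
Context {D : Category} (E M : MorClass D) (HO : is_OFS D E M).

Lemma pbf_proj_M' (Hpb : has_pullbacks D) (G : Functor A D) {C : Ob D}
  (c : Hom C (fobj G one)) :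
  M _ _ c -> M' M one _ _ (pbf_proj Hpb G c).
Proof.
  intro Hc. split; [apply pbf_proj_cartesian|].
  change (M _ _ (pbf_fst Hpb G c one)). rewrite pbf_fst_one.
  apply (ofs_M_comp _ _ _ HO); [apply (ofs_M_iso _ _ _ HO), pbf_snd_one_iso | exact Hc].
Qed.

Lemma E'_iso {F G : Functor A D} (n : NatTrans F G) :
  @is_iso (FunCat A D) F G n -> E' E one F G n.
Proof. intro Hn. apply (ofs_E_iso _ _ _ HO), nt_iso_component, Hn. Qed.

Lemma M'_iso {F G : Functor A D} (n : NatTrans F G) :
  @is_iso (FunCat A D) F G n -> M' M one F G n.
Proof.
  intro Hn. split.
  - intros a b h. apply pullback_of_isos; [apply nt_iso_component, Hn.. |].
    apply nt_natural.
  - apply (ofs_M_iso _ _ _ HO), nt_iso_component, Hn.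
Qed.

Lemma E'_comp {F G H : Functor A D} (g : NatTrans G H) (f : NatTrans F G) :
  E' E one F G f -> E' E one G H g -> E' E one F H (nt_comp g f).
Proof. apply (ofs_E_comp _ _ _ HO). Qed.

Lemma M'_comp {F G H : Functor A D} (g : NatTrans G H) (f : NatTrans F G) :
  M' M one F G f -> M' M one G H g -> M' M one F H (nt_comp g f).
Proof.
  intros [Cf Mf] [Cg Mg]. split.
  - intros a b h. exact (pullback_compose _ _ _ _ _ (fmap G h) _ (Cf a b h) (Cg a b h)).
  - exact (ofs_M_comp _ _ _ HO _ _ _ _ _ Mf Mg).
Qed.

Lemma E'_M'_lift {X Y Z W : Functor A D} (e : NatTrans X Y) (m : NatTrans Z W)
  (f : NatTrans X Z) (g : NatTrans Y W) :
  E' E one X Y e -> M' M one Z W m -> nt_comp g e = nt_comp m f ->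
  exists! d : NatTrans Y Z, nt_comp d e = f /\ nt_comp m d = g.
Proof.
  intros He [Hcart Hm] Hsq.
  assert (Hsq_at : forall a, ntc g a ∘ ntc e a = ntc m a ∘ ntc f a)
    by (intro a; exact (f_equal (fun k => ntc k a) Hsq)).
  destruct (ofs_lift _ _ _ HO _ _ _ _ _ _ _ _ He Hm (Hsq_at one))
    as [d1 [[Hd1e Hmd1] Hd1_unique]].
  exists (cartesian_extend m Hcart g d1 Hmd1). split; [split|].
  - apply (cartesian_nt_ext m Hcart); intros; cbn [ntc nt_comp].
    + rewrite comp_assoc, cartesian_extend_comp. apply Hsq_at.
    + rewrite cartesian_extend_one. exact Hd1e.
  - apply nt_eq; intro a. apply cartesian_extend_comp.
  - intros d [Hde Hmd].
    apply (cartesian_nt_ext m Hcart).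
    + intro a. rewrite cartesian_extend_comp. exact (eq_sym (f_equal (fun k => ntc k a) Hmd)).
    + rewrite cartesian_extend_one. apply Hd1_unique.
      split; [exact (f_equal (fun k => ntc k one) Hde) |
              exact (f_equal (fun k => ntc k one) Hmd)].
Qed.

Lemma E'_M'_factor (Hpb : has_pullbacks D) {X Y : Functor A D} (f : NatTrans X Y) :
  exists Z (e : NatTrans X Z) (m : NatTrans Z Y),
    E' E one X Z e /\ M' M one Z Y m /\ nt_comp m e = f.
Proof.
  destruct (ofs_fact _ _ _ HO _ _ (ntc f one)) as [C [e1 [m1 [He1 [Hm1 Hf1]]]]].
  set (e a := e1 ∘ fmap X (bang a)).
  assert (Hcone : forall a, fmap Y (bang a) ∘ ntc f a = m1 ∘ e a).
  { intro a. rewrite nt_natural. unfold e. rewrite comp_assoc, Hf1. reflexivity. }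
  assert (Hconst : forall a b (h : Hom a b), e b ∘ fmap X h = e a).
  { intros a b h. unfold e. rewrite <- comp_assoc, <- fmap_comp, bang_comp. reflexivity. }
  exists (pullback_functor Hpb Y m1), (pbf_pair Hpb Y m1 f e Hcone Hconst),
    (pbf_proj Hpb Y m1).
  split; [|split].
  - apply (ofs_E_cancel_iso HO _ _ (pbf_snd_one_iso Hpb Y m1)).
    rewrite pbf_pair_snd. unfold e. rewrite bang_one, fmap_id, comp_id_r. exact He1.
  - apply pbf_proj_M', Hm1.
  - apply nt_eq; intro a. apply pbf_pair_fst.
Qed.

Lemma functor_category_ofs (Hpb : has_pullbacks D) :
  is_OFS (FunCat A D) (E' E one) (M' M one).
Proof.
  split.
  - exact (@E'_iso).
  - exact (@M'_iso).
  - exact (@E'_comp).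
  - exact (@M'_comp).
  - exact (@E'_M'_lift).
  - exact (@E'_M'_factor Hpb).
Qed.

Section SliceEquivalence.
Context (Hpb : has_pullbacks D) (G : Functor A D).

Definition eval_one_ob (x : SliceOb (M' M one) G) : SliceOb M (fobj G one) :=
  existT _ (fobj (projT1 x) one)
    (exist _ (ntc (slice_map x) one) (proj2 (proj2_sig (projT2 x)))).

Definition eval_one_hom {x y : SliceOb (M' M one) G} (phi : SliceHom x y) :
  SliceHom (eval_one_ob x) (eval_one_ob y) :=
  exist _ (ntc (proj1_sig phi) one) (slice_nt_comm phi one).

Definition slice_eval_one : Functor (Slice (M' M one) G) (Slice M (fobj G one)).
Proof.
  refine {| fobj := eval_one_ob : Ob (Slice (M' M one) G) -> Ob (Slice M (fobj G one));
            fmap := fun x y phi => eval_one_hom phi |};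
    intros; apply slice_hom_eq; reflexivity.
Defined.

Definition pullback_ob (y : SliceOb M (fobj G one)) : SliceOb (M' M one) G :=
  existT _ (pullback_functor Hpb G (slice_map y))
    (exist _ (pbf_proj Hpb G (slice_map y)) (pbf_proj_M' Hpb G _ (proj2_sig (projT2 y)))).

Definition pullback_hom {y y' : SliceOb M (fobj G one)} (k : SliceHom y y') :
  SliceHom (pullback_ob y) (pullback_ob y').
Proof.
  refine (exist _ (pullback_functor_map Hpb G _ _ (proj1_sig k) (proj2_sig k)) _).
  apply nt_eq; intro a. apply pullback_functor_map_fst.
Defined.

Definition slice_pullback : Functor (Slice M (fobj G one)) (Slice (M' M one) G).
Proof.
  refine {| fobj := pullback_ob : Ob (Slice M (fobj G one)) -> Ob (Slice (M' M one) G);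
            fmap := fun y y' k => pullback_hom k |}.
  - intro y. apply slice_hom_eq. apply pullback_functor_map_id.
  - intros y1 y2 y3 k2 k1. apply slice_hom_eq. apply pullback_functor_map_comp.
Defined.

Lemma slice_cartesian (x : SliceOb (M' M one) G) : is_cartesian (slice_map x).
Proof. exact (proj1 (proj2_sig (projT2 x))). Qed.

Section Reconstruction.
Context (x : SliceOb (M' M one) G).

Lemma reconstruction_one :
  ntc (slice_map x) one ∘ pbf_snd Hpb G (ntc (slice_map x) one) one =
  ntc (pbf_proj Hpb G (ntc (slice_map x) one)) one.
Proof. symmetry. apply pbf_fst_one. Qed.

Definition reconstruction :
  NatTrans (pullback_functor Hpb G (ntc (slice_map x) one)) (projT1 x) :=
  cartesian_extend (slice_map x) (slice_cartesian x)
    (pbf_proj Hpb G (ntc (slice_map x) one)) _ reconstruction_one.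

Lemma reconstruction_comp a :
  ntc (slice_map x) a ∘ ntc reconstruction a = pbf_fst Hpb G (ntc (slice_map x) one) a.
Proof. apply cartesian_extend_comp. Qed.

Lemma reconstruction_one_component :
  ntc reconstruction one = pbf_snd Hpb G (ntc (slice_map x) one) one.
Proof. apply cartesian_extend_one. Qed.

Lemma reconstruction_iso a : is_iso (ntc reconstruction a).
Proof.
  apply (pullback_comparison_iso (pbf_pullback Hpb G _ a) (slice_cartesian x a one (bang a)));
    [apply reconstruction_comp|].
  etransitivity; [exact (nt_natural reconstruction (bang a))|].
  rewrite reconstruction_one_component. apply pbf_fmap_snd.
Qed.
End Reconstruction.

Definition pullback_eval_component (x : SliceOb (M' M one) G) :
  @Hom (Slice (M' M one) G) (fobj (Fcomp slice_pullback slice_eval_one) x) x.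
Proof.
  refine (exist _ (reconstruction x) _).
  apply nt_eq; intro a. apply reconstruction_comp.
Defined.

Lemma reconstruction_natural (x y : SliceOb (M' M one) G) (phi : SliceHom x y) :
  nt_comp (proj1_sig phi) (reconstruction x) =
  nt_comp (reconstruction y)
    (pullback_functor_map Hpb G _ _ (ntc (proj1_sig phi) one) (slice_nt_comm phi one)).
Proof.
  apply (cartesian_nt_ext (slice_map y) (slice_cartesian y)); cbn [ntc nt_comp].
  - intro a. rewrite !comp_assoc, slice_nt_comm, !reconstruction_comp.
    symmetry. apply pullback_functor_map_fst.
  - rewrite !reconstruction_one_component. symmetry. apply pullback_functor_map_snd.
Qed.

Lemma pullback_eval_natural (x y : SliceOb (M' M one) G)
  (phi : @Hom (Slice (M' M one) G) x y) :
  phi ∘ pullback_eval_component x =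
  pullback_eval_component y ∘ fmap (Fcomp slice_pullback slice_eval_one) phi.
Proof. apply slice_hom_eq. exact (reconstruction_natural x y phi). Qed.

Definition pullback_eval_iso : NatTrans (Fcomp slice_pullback slice_eval_one) (Fid _) :=
  Build_NatTrans _ _ (Fcomp slice_pullback slice_eval_one) (Fid _)
    pullback_eval_component pullback_eval_natural.

Definition eval_pullback_component (y : SliceOb M (fobj G one)) :
  @Hom (Slice M (fobj G one)) (fobj (Fcomp slice_eval_one slice_pullback) y) y :=
  exist _ (pbf_snd Hpb G (slice_map y) one) (eq_sym (pbf_fst_one Hpb G (slice_map y))).

Lemma eval_pullback_natural (y y' : SliceOb M (fobj G one))
  (k : @Hom (Slice M (fobj G one)) y y') :
  k ∘ eval_pullback_component y =
  eval_pullback_component y' ∘ fmap (Fcomp slice_eval_one slice_pullback) k.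
Proof. apply slice_hom_eq. symmetry. apply pullback_functor_map_snd. Qed.

Definition eval_pullback_iso : NatTrans (Fcomp slice_eval_one slice_pullback) (Fid _) :=
  Build_NatTrans _ _ (Fcomp slice_eval_one slice_pullback) (Fid _)
    eval_pullback_component eval_pullback_natural.

Lemma slice_equivalence : equivalent (Slice (M' M one) G) (Slice M (fobj G one)).
Proof.
  exists slice_eval_one, slice_pullback. split.
  - exists pullback_eval_iso. intro x.
    apply slice_hom_iso, nt_iso_of_components, reconstruction_iso.
  - exists eval_pullback_iso. intro y. apply slice_hom_iso, pbf_snd_one_iso.
Qed.
End SliceEquivalence.
End FunctorCategoryOFS.
End TerminalObject.

Theorem lemma4p2 (D A : Category) (E M : MorClass D) (one : Ob A) :
  is_OFS D E M -> has_pullbacks D -> is_terminal one ->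
  is_OFS (FunCat A D) (E' E one) (M' M one) /\
  forall G : Functor A D,
    equivalent (@Slice (FunCat A D) (M' M one) G) (Slice M (fobj G one)).
Proof.
  intros HO Hpb Hone. split.
  - exact (functor_category_ofs Hone E M HO Hpb).
  - intro G. exact (slice_equivalence Hone E M HO Hpb G).
Qed.
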